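(* Let $\mathbb{X}$ be a Cartesian $k$-differential abstract Kleisli category with abstract Kleisli structure $(\mathsf{S},\epsilon,\vartheta)$. Then the subcategory $\vartheta\text{-}\mathsf{nat}[\mathbb{X}]$ of $\vartheta$-natural maps is a sub-Cartesian $k$-differential category of $\mathbb{X}$: it contains all maps $0:A\to\ast$ and all projections, is closed under pairing, under the $k$-module operations on hom-sets ($r\cdot f+s\cdot g$ and $0$), and under the differential combinator (if $f$ is $\vartheta$-natural then so is $\mathsf{D}[f]$), and hence is itself a Cartesian $k$-differential category with the structure inherited from $\mathbb{X}$.
   Context: Fix a commutative semiring $k$. A left $k$-linear category is a category $\mathbb{X}$ in which each hom-set $\mathbb{X}(A,B)$ is a $k$-module (scalar multiplication $r\cdot f$, addition $+$, zero $0$) such that precomposition is $k$-linear: $(r\cdot f+s\cdot g)\circ x=r\cdot(f\circ x)+s\cdot(g\circ x)$. A map $f$ is $k$-linear if $f\circ(r\cdot x+s\cdot y)=r\cdot(f\circ x)+s\cdot(f\circ y)$ for all suitable $x,y$ and $r,s\in k$. A Cartesian left $k$-linear category is a left $k$-linear category with finite products (terminal object $\ast$, projections $\pi_j:A_1\times\cdots\times A_n\to A_j$, pairing $\langle-,\dots,-\rangle$) in which all projections are $k$-linear. A Cartesian $k$-differential category is a Cartesian left $k$-linear category equipped with a differential combinator $\mathsf{D}$ assigning to each $f:A\to B$ a map $\mathsf{D}[f]:A\times A\to B$ such that: [CD.1] $\mathsf{D}[r\cdot f+s\cdot g]=r\cdot\mathsf{D}[f]+s\cdot\mathsf{D}[g]$;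 [CD.2] $\mathsf{D}[f]\circ\langle\pi_1,r\cdot\pi_2+s\cdot\pi_3\rangle=r\cdot(\mathsf{D}[f]\circ\langle\pi_1,\pi_2\rangle)+s\cdot(\mathsf{D}[f]\circ\langle\pi_1,\pi_3\rangle)$ (as maps $A\times A\times A\to B$); [CD.3] $\mathsf{D}[1_A]=\pi_2$ and, for $\pi_j:A_1\times\cdots\times A_n\to A_j$, $\mathsf{D}[\pi_j]=\pi_{n+j}$; [CD.4] $\mathsf{D}[\langle f_1,\dots,f_n\rangle]=\langle\mathsf{D}[f_1],\dots,\mathsf{D}[f_n]\rangle$; [CD.5] $\mathsf{D}[g\circ f]=\mathsf{D}[g]\circ\langle f\circ\pi_1,\mathsf{D}[f]\rangle$; [CD.6] $\mathsf{D}[\mathsf{D}[f]]\circ\langle\pi_1,0,0,\pi_2\rangle=\mathsf{D}[f]$; [CD.7] $\mathsf{D}[\mathsf{D}[f]]\circ\langle\pi_1,\pi_2,\pi_3,\pi_4\rangle=\mathsf{D}[\mathsf{D}[f]]\circ\langle\pi_1,\pi_3,\pi_2,\pi_4\rangle$ (identifying $(A\times A)\times(A\times A)$ with $A\times A\times A\times A$). A map $f$ is $\mathsf{D}$-linear if $\mathsf{D}[f]=f\circ\pi_2$. For Cartesian left $k$-linear categories $\mathbb{X},\mathbb{Y}$, a strong Cartesian $k$-linear functor is a functor $\mathsf{F}:\mathbb{X}\to\mathbb{Y}$ such that $\mathsf{F}(\ast)\to\ast$ is an isomorphism, the canonical maps $\omega_{A_1,\dots,A_n}=\langle\mathsf{F}(\pi_1),\dots,\mathsf{F}(\pi_n)\rangle:\mathsf{F}(A_1\times\cdots\times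 A_n)\to\mathsf{F}(A_1)\times\cdots\times\mathsf{F}(A_n)$ are isomorphisms, and $\mathsf{F}(r\cdot f+s\cdot g)=r\cdot\mathsf{F}(f)+s\cdot\mathsf{F}(g)$. For Cartesian $k$-differential categories, a strong Cartesian $k$-differential functor is a strong Cartesian $k$-linear functor with $\mathsf{D}[\mathsf{F}(f)]=\mathsf{F}(\mathsf{D}[f])\circ\omega^{-1}_{A,A}$ for all $f:A\to B$. An abstract Kleisli structure on a category $\mathbb{X}$ is a triple $(\mathsf{S},\epsilon,\vartheta)$ of an endofunctor $\mathsf{S}$, a natural transformation $\epsilon_A:\mathsf{S}(A)\to A$, and a family of maps $\vartheta_A:A\to\mathsf{S}(A)$ (not necessarily natural) such that $\vartheta_{\mathsf{S}(A)}$ is natural in $A$ and $\epsilon_A\circ\vartheta_A=1_A$, $\epsilon_{\mathsf{S}(A)}\circ\mathsf{S}(\vartheta_A)=1_{\mathsf{S}(A)}$, $\vartheta_{\mathsf{S}(A)}\circ\vartheta_A=\mathsf{S}(\vartheta_A)\circ\vartheta_A$. A map $f:A\to B$ is $\vartheta$-natural if $\vartheta_B\circ f=\mathsf{S}(f)\circ\vartheta_A$; $\vartheta\text{-}\mathsf{nat}[\mathbb{X}]$ denotes the subcategory of $\vartheta$-natural maps. A Cartesian $k$-differential abstract Kleisli category is a Cartesian $k$-differential category $\mathbb{X}$ with an abstract Kleisli structure $(\mathsf{S},\epsilon,\vartheta)$ such that all projections are $\vartheta$-natural, $\mathsf{S}$ is a strong Cartesian $k$-differential functor, and every $\epsilon_A$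 and $\vartheta_A$ is $\mathsf{D}$-linear. *)

From HB Require Import structures.
From mathcomp Require Import all_boot all_algebra.

Import GRing.Theory.
Local Open Scope ring_scope.

Record klincat (k : comPzSemiRingType) := KLinCat {
  ob : Type;
  khom : ob -> ob -> lSemiModType k;
  kcomp : forall A B C : ob, khom B C -> khom A B -> khom A C;
  kid : forall A : ob, khom A A;
  compA : forall A B C kD (h : khom C kD) (g : khom B C) (f : khom A B),
      kcomp _ _ _ h (kcomp _ _ _ g f) = kcomp _ _ _ (kcomp _ _ _ h g) f;
  comp1m : forall A B (f : khom A B), kcomp _ _ _ (kid B) f = f;
  compm1 : forall A B (f : khom A B), kcomp _ _ _ f (kid A) = f;
  comp_linl : forall A B C (f g : khom B C) (x : khom A B) (r s : k),
      kcomp _ _ _ (r *: f + s *: g) x = r *: kcomp _ _ _ f x + s *: kcomp _ _ _ g x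
}.
Arguments ob {k}.
Arguments khom {k X} A B : rename.
Arguments kcomp {k X A B C} g f : rename.
Arguments kid {k X} A : rename.

Definition klinear {k : comPzSemiRingType} {X : klincat k} {A B : ob X}
  (f : khom A B) : Prop :=
  forall (C : ob X) (x y : khom C A) (r s : k),
    kcomp f (r *: x + s *: y) = r *: kcomp f x + s *: kcomp f y.

(* Cartesian left k-linear categories (binary products + terminal object;
   n-ary products are iterated binary ones), with k-linear projections. *)
Record cartesian {k : comPzSemiRingType} (X : klincat k) := Cartesian {
  kterm : ob X;
  kbang : forall A : ob X, khom A kterm;
  bang_uniq : forall A (f : khom A kterm), f = kbang A;
  kprod : ob X -> ob X -> ob X;
  kp1 : forall A B, khom (kprod A B) A;
  kp2 : forall A B, khom (kprod A B) B;
  kpair : forall C A B, khom C A -> khom C B -> khom C (kprod A B);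
  p1_pair : forall C A B (f : khom C A) (g : khom C B), kcomp (kp1 A B) (kpair _ _ _ f g) = f;
  p2_pair : forall C A B (f : khom C A) (g : khom C B), kcomp (kp2 A B) (kpair _ _ _ f g) = g;
  pair_eta : forall C A B (h : khom C (kprod A B)),
      kpair _ _ _ (kcomp (kp1 A B) h) (kcomp (kp2 A B) h) = h;
  p1_klinear : forall A B, klinear (kp1 A B);
  p2_klinear : forall A B, klinear (kp2 A B)
}.
Arguments kterm {k X} c : rename.
Arguments kbang {k X c} A : rename.
Arguments kprod {k X c} A B : rename.
Arguments kp1 {k X c} A B : rename.
Arguments kp2 {k X c} A B : rename.
Arguments kpair {k X c C A B} f g : rename.

Section Helpers.
Context {k : comPzSemiRingType} {X : klincat k} {c : cartesian X}.
Local Notation kprod := (@kprod _ _ c).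

(* projections of A x (A x A), i.e. of "A x A x A" *)
Definition pi1_3 (A : ob X) : khom (kprod A (kprod A A)) A := kp1 A (kprod A A).
Definition pi2_3 (A : ob X) : khom (kprod A (kprod A A)) A :=
  kcomp (kp1 A A) (kp2 A (kprod A A)).
Definition pi3_3 (A : ob X) : khom (kprod A (kprod A A)) A :=
  kcomp (kp2 A A) (kp2 A (kprod A A)).

(* projections of (A x A) x (A x A), identified with A x A x A x A *)
Definition q1_4 (A : ob X) : khom (kprod (kprod A A) (kprod A A)) A :=
  kcomp (kp1 A A) (kp1 (kprod A A) (kprod A A)).
Definition q2_4 (A : ob X) : khom (kprod (kprod A A) (kprod A A)) A :=
  kcomp (kp2 A A) (kp1 (kprod A A) (kprod A A)).
Definition q3_4 (A : ob X) : khom (kprod (kprod A A) (kprod A A)) A :=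
  kcomp (kp1 A A) (kp2 (kprod A A) (kprod A A)).
Definition q4_4 (A : ob X) : khom (kprod (kprod A A) (kprod A A)) A :=
  kcomp (kp2 A A) (kp2 (kprod A A) (kprod A A)).
End Helpers.

Section CDiffDef.
Context {k : comPzSemiRingType} {X : klincat k} (c : cartesian X).
Local Notation kprod := (@kprod _ _ c).
Local Notation kp1 := (@kp1 _ _ c).
Local Notation kp2 := (@kp2 _ _ c).
Local Notation kpair := (@kpair _ _ c _ _ _).
Local Notation pi1_3 := (@pi1_3 _ _ c).
Local Notation pi2_3 := (@pi2_3 _ _ c).
Local Notation pi3_3 := (@pi3_3 _ _ c).
Local Notation q1_4 := (@q1_4 _ _ c).
Local Notation q2_4 := (@q2_4 _ _ c).
Local Notation q3_4 := (@q3_4 _ _ c).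
Local Notation q4_4 := (@q4_4 _ _ c).
Record cdiff := CDiff {
  kD : forall A B : ob X, khom A B -> khom (kprod A A) B;
  CD1 : forall A B (f g : khom A B) (r s : k),
      kD _ _ (r *: f + s *: g) = r *: kD _ _ f + s *: kD _ _ g;
  CD2 : forall A B (f : khom A B) (r s : k),
      kcomp (kD _ _ f) (kpair ((pi1_3 A)) (r *: (pi2_3 A) + s *: (pi3_3 A)))
      = r *: kcomp (kD _ _ f) (kpair ((pi1_3 A)) ((pi2_3 A)))
        + s *: kcomp (kD _ _ f) (kpair ((pi1_3 A)) ((pi3_3 A)));
  CD3_id : forall A, kD _ _ (kid A) = kp2 A A;
  CD3_p1 : forall A B, kD _ _ (kp1 A B) = kcomp (kp1 A B) (kp2 (kprod A B) (kprod A B));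
  CD3_p2 : forall A B, kD _ _ (kp2 A B) = kcomp (kp2 A B) (kp2 (kprod A B) (kprod A B));
  CD4 : forall C A B (f : khom C A) (g : khom C B),
      kD _ _ (kpair f g) = kpair (kD _ _ f) (kD _ _ g);
  CD5 : forall A B C (g : khom B C) (f : khom A B),
      kD _ _ (kcomp g f) = kcomp (kD _ _ g) (kpair (kcomp f (kp1 A A)) (kD _ _ f));
  CD6 : forall A B (f : khom A B),
      kcomp (kD _ _ (kD _ _ f)) (kpair (kpair (kp1 A A) 0) (kpair 0 (kp2 A A))) = kD _ _ f;
  CD7 : forall A B (f : khom A B),
      kcomp (kD _ _ (kD _ _ f)) (kpair (kpair ((q1_4 A)) ((q2_4 A))) (kpair ((q3_4 A)) ((q4_4 A))))
      = kcomp (kD _ _ (kD _ _ f)) (kpair (kpair ((q1_4 A)) ((q3_4 A))) (kpair ((q2_4 A)) ((q4_4 A))))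
}.
End CDiffDef.
Arguments kD {k X c d A B} f : rename.

Section KleisliDef.
Context {k : comPzSemiRingType} {X : klincat k} {c : cartesian X} (d : cdiff c).
Local Notation kprod := (@kprod _ _ c).
Local Notation kp1 := (@kp1 _ _ c).
Local Notation kp2 := (@kp2 _ _ c).
Local Notation kpair := (@kpair _ _ c _ _ _).
Local Notation kterm := (@kterm _ _ c).
Local Notation kbang := (@kbang _ _ c).
Local Notation kD := (@kD _ _ c d _ _).
Record cdakleisli := CDAKleisli {
  Sob : ob X -> ob X;
  Shom : forall A B, khom A B -> khom (Sob A) (Sob B);
  S_id : forall A, Shom _ _ (kid A) = kid (Sob A);
  S_comp : forall A B C (g : khom B C) (f : khom A B),
      Shom _ _ (kcomp g f) = kcomp (Shom _ _ g) (Shom _ _ f);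
  S_term_inv : khom kterm (Sob kterm);
  S_term_iso1 : kcomp (kbang (Sob kterm)) S_term_inv = kid kterm;
  S_term_iso2 : kcomp S_term_inv (kbang (Sob kterm)) = kid (Sob kterm);
  omega_inv : forall A B, khom (kprod (Sob A) (Sob B)) (Sob (kprod A B));
  omega_iso1 : forall A B,
      kcomp (kpair (Shom _ _ (kp1 A B)) (Shom _ _ (kp2 A B))) (omega_inv A B)
      = kid (kprod (Sob A) (Sob B));
  omega_iso2 : forall A B,
      kcomp (omega_inv A B) (kpair (Shom _ _ (kp1 A B)) (Shom _ _ (kp2 A B)))
      = kid (Sob (kprod A B));
  S_klin : forall A B (f g : khom A B) (r s : k),
      Shom _ _ (r *: f + s *: g) = r *: Shom _ _ f + s *: Shom _ _ g;
  S_D : forall A B (f : khom A B),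
      kD (Shom _ _ f) = kcomp (Shom _ _ (kD f)) (omega_inv A A);
  eps : forall A, khom (Sob A) A;
  theta : forall A, khom A (Sob A);
  eps_nat : forall A B (f : khom A B), kcomp (eps B) (Shom _ _ f) = kcomp f (eps A);
  thetaS_nat : forall A B (f : khom A B),
      kcomp (theta (Sob B)) (Shom _ _ f)
      = kcomp (Shom _ _ (Shom _ _ f)) (theta (Sob A));
  eps_theta : forall A, kcomp (eps A) (theta A) = kid A;
  epsS_Stheta : forall A, kcomp (eps (Sob A)) (Shom _ _ (theta A)) = kid (Sob A);
  theta_theta : forall A,
      kcomp (theta (Sob A)) (theta A) = kcomp (Shom _ _ (theta A)) (theta A);
  p1_theta_nat : forall A B,
      kcomp (theta A) (kp1 A B) = kcomp (Shom _ _ (kp1 A B)) (theta (kprod A B));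
  p2_theta_nat : forall A B,
      kcomp (theta B) (kp2 A B) = kcomp (Shom _ _ (kp2 A B)) (theta (kprod A B));
  eps_Dlin : forall A, kD (eps A) = kcomp (eps A) (kp2 (Sob A) (Sob A));
  theta_Dlin : forall A, kD (theta A) = kcomp (theta A) (kp2 A A)
}.
End KleisliDef.
Arguments Sob {k X c d} K A : rename.
Arguments Shom {k X c d} K {A B} f : rename.
Arguments eps {k X c d} K A : rename.
Arguments theta {k X c d} K A : rename.

Definition theta_nat {k : comPzSemiRingType} {X : klincat k} {c : cartesian X}
  {d : cdiff c} (K : cdakleisli d) {A B : ob X} (f : khom A B) : Prop :=
  kcomp (theta K B) f = kcomp (Shom K f) (theta K A).

From Pilot Require Import Defs.
From HB Require Import structures.
From mathcomp Require Import all_boot all_algebra.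
Import GRing.Theory.
Local Open Scope ring_scope.

(* The argument rests on three general facts, developed first:
   - in a Cartesian left k-linear category, pairing distributes over
     precomposition and split monomorphisms (such as the comparison maps
     omega = <S pi1, S pi2> and the unique map from S of the terminal
     object to the terminal object) can be cancelled;
   - in a Cartesian k-differential category every D-linear map is k-linear
     (by [CD.2], since f o h = D[f] o <a, h> for D-linear f);
   - theta_{A x A} is the composite omega^{-1} o (theta_A x theta_A),
     because the projections are theta-natural.
   Closure under identities, composites, maps into the terminal object and
   projections is then immediate; closure under pairing follows by
   cancelling omega; closure under k-linear combinations uses that theta is
   k-linear (being D-linear) and S is k-linear; closure under D combines
   [CD.5], the D-linearity of theta and the strong differential functor law
   D[S f] = S(D f) o omega^{-1}. *)

Section CartesianFacts.
Context {k : comPzSemiRingType} {X : klincat k} (c : cartesian X).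
Local Notation kpair := (@kpair _ _ c _ _ _).

Lemma kcompA (A B C E : ob X) (h : khom C E) (g : khom B C) (f : khom A B) :
  kcomp h (kcomp g f) = kcomp (kcomp h g) f.
Proof. exact: Defs.compA. Qed.

Lemma pair_comp (C C' A B : ob X) (f : khom C A) (g : khom C B) (h : khom C' C) :
  kcomp (kpair f g) h = kpair (kcomp f h) (kcomp g h).
Proof. by rewrite -[LHS](pair_eta _ c) !kcompA (p1_pair _ c) (p2_pair _ c). Qed.

Lemma comp0l (A B C : ob X) (x : khom A B) : kcomp (0 : khom B C) x = 0.
Proof.
have := comp_linl _ X _ _ _ (0 : khom B C) 0 x 0 0.
by rewrite !scale0r !add0r.
Qed.

Lemma klinear_comp0 (A B C : ob X) (f : khom A B) :
  klinear f -> kcomp f (0 : khom C A) = 0.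
Proof. by move=> /(_ C 0 0 0 0); rewrite !scale0r !add0r. Qed.

Lemma split_mono {A B C : ob X} {m : khom A B} {r : khom B A}
    (f g : khom C A) :
  kcomp r m = kid A -> kcomp m f = kcomp m g -> f = g.
Proof.
move=> rm mfg.
by rewrite -(comp1m _ X _ _ f) -(comp1m _ X _ _ g) -rm -!kcompA mfg.
Qed.

End CartesianFacts.

Section DifferentialFacts.
Context {k : comPzSemiRingType} {X : klincat k} {c : cartesian X} (d : cdiff c).
Local Notation kp2 := (@kp2 _ _ c).
Local Notation kpair := (@kpair _ _ c _ _ _).
Local Notation kD := (@kD _ _ c d _ _).

Lemma Dlin_eval {A B C : ob X} (f : khom A B) (a h : khom C A) :
  kD f = kcomp f (kp2 A A) -> kcomp (kD f) (kpair a h) = kcomp f h.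
Proof. by move=> Df; rewrite Df -kcompA (p2_pair _ c). Qed.

(* Every D-linear map is k-linear: this is the content of [CD.2]. *)
Lemma Dlin_klinear (A B : ob X) (f : khom A B) :
  kD f = kcomp f (kp2 A A) -> klinear f.
Proof.
move=> Df C x y r s.
set t := kpair x (kpair x y).
have t1 : kcomp (pi1_3 A) t = x by rewrite /pi1_3 (p1_pair _ c).
have t2 : kcomp (pi2_3 A) t = x by rewrite /pi2_3 -kcompA !(p2_pair, p1_pair).
have t3 : kcomp (pi3_3 A) t = y by rewrite /pi3_3 -kcompA !(p2_pair _ c).
have sum_at_t : kpair x (r *: x + s *: y) =
    kcomp (kpair (pi1_3 A) (r *: pi2_3 A + s *: pi3_3 A)) t.
  by rewrite pair_comp comp_linl t1 t2 t3.
rewrite -(Dlin_eval _ x _ Df) -(Dlin_eval _ x x Df) -(Dlin_eval _ x y Df).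
rewrite sum_at_t kcompA (CD2 _ d) comp_linl.
by rewrite -!kcompA !pair_comp t1 t2 t3.
Qed.

End DifferentialFacts.

Section ThetaNatural.
Context {k : comPzSemiRingType} {X : klincat k} {c : cartesian X}
  {d : cdiff c} (K : cdakleisli d).
Local Notation kprod := (@kprod _ _ c).
Local Notation kp1 := (@kp1 _ _ c).
Local Notation kp2 := (@kp2 _ _ c).
Local Notation kpair := (@kpair _ _ c _ _ _).
Local Notation kD := (@kD _ _ c d _ _).
Local Notation S := (Shom K).
Local Notation theta := (theta K).
Local Notation omega A B := (kpair (S (kp1 A B)) (S (kp2 A B))).

Lemma S0 (A B : ob X) : S (0 : khom A B) = 0.
Proof.
have := S_klin _ K _ _ (0 : khom A B) 0 0 0.
by rewrite !scale0r !add0r.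
Qed.

Lemma omega_cancel (C A B : ob X) (f g : khom C (Sob K (kprod A B))) :
  kcomp (omega A B) f = kcomp (omega A B) g -> f = g.
Proof. exact: split_mono f g (omega_iso2 _ K A B). Qed.

Lemma theta_klinear (A : ob X) : klinear (theta A).
Proof. exact: Dlin_klinear (theta_Dlin _ K A). Qed.

Lemma omega_theta (A B : ob X) :
  kcomp (omega A B) (theta (kprod A B))
  = kpair (kcomp (theta A) (kp1 A B)) (kcomp (theta B) (kp2 A B)).
Proof. by rewrite pair_comp -(p1_theta_nat _ K) -(p2_theta_nat _ K). Qed.

Lemma omega_inv_theta (A : ob X) :
  kcomp (omega_inv d K A A)
        (kpair (kcomp (theta A) (kp1 A A)) (kcomp (theta A) (kp2 A A)))
  = theta (kprod A A).
Proof.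
apply: omega_cancel.
by rewrite kcompA omega_iso1 comp1m omega_theta.
Qed.

Lemma theta_nat_id (A : ob X) : theta_nat K (kid A).
Proof. by rewrite /theta_nat S_id comp1m compm1. Qed.

Lemma theta_nat_comp (A B C : ob X) (g : khom B C) (f : khom A B) :
  theta_nat K g -> theta_nat K f -> theta_nat K (kcomp g f).
Proof.
by move=> Hg Hf; rewrite /theta_nat kcompA Hg -kcompA Hf kcompA S_comp.
Qed.

(* Every map into the terminal object is theta-natural, since S(1) is
   terminal as well. *)
Lemma theta_nat_to_term (A : ob X) (f : khom A (kterm c)) : theta_nat K f.
Proof.
rewrite /theta_nat; apply: (split_mono _ _ (S_term_iso2 _ K)).
by rewrite (bang_uniq _ c _ (kcomp _ _)) (bang_uniq _ c _ (kcomp _ _)).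
Qed.

Lemma theta_nat_p1 (A B : ob X) : theta_nat K (kp1 A B).
Proof. exact: p1_theta_nat. Qed.

Lemma theta_nat_p2 (A B : ob X) : theta_nat K (kp2 A B).
Proof. exact: p2_theta_nat. Qed.

Lemma theta_nat_pair (C A B : ob X) (f : khom C A) (g : khom C B) :
  theta_nat K f -> theta_nat K g -> theta_nat K (kpair f g).
Proof.
move=> Hf Hg; apply: omega_cancel.
rewrite !kcompA omega_theta !pair_comp -!S_comp (p1_pair _ c) (p2_pair _ c).
by rewrite -!kcompA (p1_pair _ c) (p2_pair _ c) Hf Hg.
Qed.

Lemma theta_nat_lincomb (A B : ob X) (f g : khom A B) (r s : k) :
  theta_nat K f -> theta_nat K g -> theta_nat K (r *: f + s *: g).
Proof.
by move=> Hf Hg; rewrite /theta_nat (theta_klinear B) Hf Hg S_klin comp_linl.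
Qed.

Lemma theta_nat_zero (A B : ob X) : theta_nat K (0 : khom A B).
Proof. by rewrite /theta_nat S0 comp0l; apply/klinear_comp0/theta_klinear. Qed.

(* By [CD.5] and D-linearity of theta, D[theta o f] = theta o D[f]. *)
Lemma D_theta_comp (A B : ob X) (f : khom A B) :
  kD (kcomp (theta B) f) = kcomp (theta B) (kD f).
Proof. by rewrite (CD5 _ d) (Dlin_eval d _ _ _ (theta_Dlin _ K B)). Qed.

Lemma theta_nat_D (A B : ob X) (f : khom A B) :
  theta_nat K f -> theta_nat K (kD f).
Proof.
move=> Hf; rewrite /theta_nat -D_theta_comp Hf (CD5 _ d) (S_D _ K) theta_Dlin.
by rewrite -!kcompA omega_inv_theta.
Qed.

End ThetaNatural.

Theorem mainTheorem5 (k : comPzSemiRingType) (X : klincat k) (c : cartesian X)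
  (d : cdiff c) (K : cdakleisli d) :
  (forall A : ob X, theta_nat K (kid A)) /\
  (forall (A B C : ob X) (g : khom B C) (f : khom A B),
      theta_nat K g -> theta_nat K f -> theta_nat K (kcomp g f)) /\
  (forall A : ob X, theta_nat K (0 : khom A (kterm c))) /\
  (forall A B : ob X, theta_nat K (kp1 (c:=c) A B) /\ theta_nat K (kp2 (c:=c) A B)) /\
  (forall (C A B : ob X) (f : khom C A) (g : khom C B),
      theta_nat K f -> theta_nat K g -> theta_nat K (kpair (c:=c) f g)) /\
  (forall (A B : ob X) (f g : khom A B) (r s : k),
      theta_nat K f -> theta_nat K g -> theta_nat K (r *: f + s *: g)) /\
  (forall A B : ob X, theta_nat K (0 : khom A B)) /\
  (forall (A B : ob X) (f : khom A B), theta_nat K f -> theta_nat K (kD (d:=d) f)).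
Proof.
split; first exact: theta_nat_id.
split; first exact: theta_nat_comp.
split; first by move=> A; exact: theta_nat_to_term.
split; first by move=> A B; split; [exact: theta_nat_p1 | exact: theta_nat_p2].
split; first exact: theta_nat_pair.
split; first exact: theta_nat_lincomb.
split; first exact: theta_nat_zero.
exact: theta_nat_D.
Qed.
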